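(* Let $G$ be a connected signed digraph with $n$ vertices that is not a signed cycle. Then there exists a degree-bounded finite dynamical system $f$ on $G$ such that $f^{n+1}$ is a constant map.
   Context: A finite dynamical system (FDS) with $n$ components is a map $f=(f_1,\dots,f_n):X\to X$ where $X=X_1\times\cdots\times X_n$ and each $X_i$ is a nonempty finite interval of integers; $f^k$ denotes the $k$-fold composition of $f$ with itself. A signed digraph is a pair $G=(V,E)$ with $E\subseteq V\times V\times\{+,-\}$; $(j,i,s)\in E$ is an arc from $j$ to $i$ of sign $s$ (loops are allowed, and $G$ may have both a positive and a negative arc from $j$ to $i$, called parallel arcs). Write $G^+_i=\{j:(j,i,+)\in E\}$, $G^-_i=\{j:(j,i,-)\in E\}$, $G_i=G^+_i\cup G^-_i$. The in-degree of $i$ is $d^{\mathrm{in}}_G(i)=|G^+_i|+|G^-_i|$ and the out-degree $d^{\mathrm{out}}_G(i)$ is the number of positive arcs leaving $i$ plus the number of negative arcs leaving $i$. $G$ is connected if its underlying undirected graph is connected. The underlying unsigned digraph $|G|$ has vertex set $V$ and an arc from $j$ to $i$ iff $j\in G_i$. $G$ is a signed cycle if $|G|$ is a directed cycle (through all vertices, each exactly once; a single vertex with a loop counts) and $G$ has no parallel arcs. The interaction graph of an FDS $f$ with $n$ components is the signed digraph on vertex set $\{1,\dots,n\}$ having a positive (resp. negative) arc from $j$ to $i$ iff there is $x\in X$ with $x_j<\max(X_j)$ such that $f_i(x+e_j)-f_i(x)$ is positive (resp. negative), where $e_j$ is the $j$-th unit vector. $f$ is an FDS on $G$ if $G$ is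 its interaction graph. $f$ is degree-bounded if, with $G$ its interaction graph, for every $i$: $|X_i|=2$ if $d^{\mathrm{out}}_G(i)=0<d^{\mathrm{in}}_G(i)$, and $|X_i|\le d^{\mathrm{out}}_G(i)+1$ otherwise. *)

From mathcomp Require Import all_boot all_order all_algebra.
Set Implicit Arguments. Unset Strict Implicit. Unset Printing Implicit Defensive.
Import Order.TTheory GRing.Theory Num.Theory.
Local Open Scope ring_scope.

(* A signed digraph on vertex set 'I_n is given by two relations:
   pos j i  <=> there is a positive arc from j to i,
   neg j i  <=> there is a negative arc from j to i. *)

Definition arcG n (pos neg : rel 'I_n) : rel 'I_n := fun j i => pos j i || neg j i.

Definition indeg n (pos neg : rel 'I_n) (i : 'I_n) : nat :=
  (#|[set j | pos j i]| + #|[set j | neg j i]|)%N.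

Definition outdeg n (pos neg : rel 'I_n) (i : 'I_n) : nat :=
  (#|[set k | pos i k]| + #|[set k | neg i k]|)%N.

Definition sconnected n (pos neg : rel 'I_n) : Prop :=
  forall u v : 'I_n, connect (fun a b => arcG pos neg a b || arcG pos neg b a) u v.

Definition signed_cycle n (pos neg : rel 'I_n) : Prop :=
  (exists s : seq 'I_n,
      [/\ (0 < size s)%N, uniq s, (forall v, v \in s) &
          forall j i, arcG pos neg j i = (i == next s j)])
  /\ (forall j i, ~~ (pos j i && neg j i)).

Definition inX n (a b : 'I_n -> int) (x : {ffun 'I_n -> int}) : Prop :=
  forall i, a i <= x i <= b i.

Definition unit_add n (x : {ffun 'I_n -> int}) (j : 'I_n) : {ffun 'I_n -> int} :=
  [ffun k => x k + (k == j)%:R].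

Definition FDS_on n (a b : 'I_n -> int)
    (f : {ffun 'I_n -> int} -> {ffun 'I_n -> int}) (pos neg : rel 'I_n) : Prop :=
  (forall i, a i <= b i) /\
  (forall x, inX a b x -> inX a b (f x)) /\
  (forall j i, pos j i <->
      exists x, [/\ inX a b x, x j < b j & f (unit_add x j) i - f x i > 0]) /\
  (forall j i, neg j i <->
      exists x, [/\ inX a b x, x j < b j & f (unit_add x j) i - f x i < 0]).

Definition degree_bounded n (a b : 'I_n -> int) (pos neg : rel 'I_n) : Prop :=
  forall i : 'I_n,
    if (outdeg pos neg i == 0%N) && (0 < indeg pos neg i)%N
    then b i - a i + 1 = 2
    else b i - a i + 1 <= (outdeg pos neg i)%:Z + 1.

Definition constant_on n (a b : 'I_n -> int)
    (g : {ffun 'I_n -> int} -> {ffun 'I_n -> int}) : Prop :=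
  forall x y, inX a b x -> inX a b y -> g x = g y.

From mathcomp Require Import all_boot all_order all_algebra zify.
Set Implicit Arguments. Unset Strict Implicit. Unset Printing Implicit Defensive.
Import Order.TTheory GRing.Theory Num.Theory.

(* Every vertex i outputs 0 or a fixed weight omega_i, according to whether a
   gate (one condition per in-neighbour j on x_j) is open: x_j = 1 for a
   parallel arc, a threshold test on x_j otherwise, oriented so that the sign
   of the arc j -> i is realised.  Only relays (out-degree 1, positive
   in-degree) can hold an "active" value, i.e. one that opens the gate of
   their successor.  Since G is connected and is not a signed cycle, every
   set of relays is entered by an arc from outside, so the relays can be
   hung, in at most n levels, on a forest of parent arcs rooted at
   non-relays.  Orienting each threshold test on the arc from the parent, a
   relay is active after t + 1 steps only if its parent was active after t
   steps, and non-relays are never active; hence after n steps no gate is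
   open and f^(n+1) is constant. *)

Section Relays.
Variables (n : nat) (pos neg : rel 'I_n).
Local Notation arc := (arcG pos neg).
Local Notation outdeg := (outdeg pos neg).
Local Notation indeg := (indeg pos neg).

Definition parallel j i := pos j i && neg j i.
Definition has_parallel j := [exists i, parallel j i].
Definition relay j := (outdeg j == 1) && (0 < indeg j).

Lemma outdegE j : outdeg j = #|[set i | arc j i]| + #|[set i | parallel j i]|.
Proof.
rewrite /outdeg -cardsUI; congr (_ + _); by apply: eq_card => i; rewrite !inE.
Qed.

Lemma indegE i : indeg i = #|[set j | arc j i]| + #|[set j | parallel j i]|.
Proof.
rewrite /indeg -cardsUI; congr (_ + _); by apply: eq_card => j; rewrite !inE.
Qed.

Lemma parallel_arc j i : parallel j i -> arc j i.
Proof. by rewrite /arcG => /andP[->]. Qed.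

Lemma outdeg_gt0P j : reflect (exists i, arc j i) (0 < outdeg j).
Proof.
have sub : [set i | parallel j i] \subset [set i | arc j i].
  by apply/subsetP => i; rewrite !inE => /parallel_arc.
rewrite outdegE; apply: (iffP idP) => [|[i hi]].
  move=> h; have /card_gt0P[i] : 0 < #|[set i | arc j i]|.
    by move: h; have := subset_leq_card sub; lia.
  by rewrite inE; exists i.
by rewrite ltn_addr //; apply/card_gt0P; exists i; rewrite inE.
Qed.

Lemma indeg_gt0P i : reflect (exists j, arc j i) (0 < indeg i).
Proof.
have sub : [set j | parallel j i] \subset [set j | arc j i].
  by apply/subsetP => j; rewrite !inE => /parallel_arc.
rewrite indegE; apply: (iffP idP) => [|[j hj]].
  move=> h; have /card_gt0P[j] : 0 < #|[set j | arc j i]|.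
    by move: h; have := subset_leq_card sub; lia.
  by rewrite inE; exists j.
by rewrite ltn_addr //; apply/card_gt0P; exists j; rewrite inE.
Qed.

Lemma parallel_outdeg j i : parallel j i -> 2 <= outdeg j.
Proof.
move=> hp; rewrite outdegE -addn1 leq_add //; apply/card_gt0P; exists i;
  by rewrite inE // parallel_arc.
Qed.

Lemma has_parallel_outdeg j i :
  has_parallel j -> arc j i -> ~~ parallel j i -> 3 <= outdeg j.
Proof.
move=> /existsP[k hk] hi hni; rewrite outdegE -(addn1 2) leq_add //.
  have -> : 2 = #|[set k; i]| by rewrite cards2; case: eqP hk hni => // -> ->.
  apply: subset_leq_card; apply/subsetP => v; rewrite !inE.
  by case/orP => /eqP ->; rewrite // /arcG; case/andP: hk => ->.
by apply/card_gt0P; exists k; rewrite inE.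
Qed.

Lemma outdeg1_arc_unique j i k : outdeg j = 1 -> arc j i -> arc j k -> i = k.
Proof.
rewrite outdegE => hout hi hk.
have : #|[set i; k]| <= 1.
  rewrite -hout; apply: (leq_trans _ (leq_addr _ _)).
  by apply: subset_leq_card; apply/subsetP => v; rewrite !inE => /orP[] /eqP ->.
by rewrite cards2 ltnS leqn0 eqb0 negbK => /eqP.
Qed.

Lemma relay_no_parallel j i : relay j -> ~~ parallel j i.
Proof. by case/andP => /eqP h1 _; apply/negP => /parallel_outdeg; rewrite h1. Qed.

Lemma relay_no_has_parallel j : relay j -> ~~ has_parallel j.
Proof. by move=> hj; apply/existsP => -[i]; apply/negP/relay_no_parallel. Qed.

Definition out_nbr j := odflt j [pick i | arc j i].

Lemma relay_arcE j i : relay j -> arc j i = (i == out_nbr j).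
Proof.
case/andP=> /eqP hout _.
have [k hk] : exists k, arc j k by apply/outdeg_gt0P; rewrite hout.
have hnbr : arc j (out_nbr j) by rewrite /out_nbr; case: pickP => [//|/(_ k)]; rewrite hk.
by apply/idP/eqP => [hi|->]; first exact: outdeg1_arc_unique hout hi hnbr.
Qed.

Local Notation adj := (fun u v => arc u v || arc v u).

Lemma relays_in_closed_setT (U : {set 'I_n}) :
  sconnected pos neg -> {in U, forall u, relay u} ->
  (forall u j, u \in U -> arc j u -> j \in U) -> U != set0 -> U = setT.
Proof.
move=> hconn hrel hin /set0Pn[u0 hu0].
have hsurj : U \subset out_nbr @: U.
  apply/subsetP => u hu; have /andP[_ /indeg_gt0P[j hj]] := hrel u hu.
  have hjU := hin u j hu hj.
  by apply/imsetP; exists j; last by apply/eqP; rewrite -relay_arcE // hrel.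
have imU : out_nbr @: U = U.
  by apply/eqP; rewrite eq_sym eqEcard hsurj leq_imset_card.
have hout u i : u \in U -> arc u i -> i \in U.
  by move=> hu; rewrite relay_arcE ?(hrel u hu) // => /eqP ->; rewrite -imU imset_f.
have clU : closed adj U.
  move=> x y /orP[] h; apply/idP/idP => ?;
    [exact: hout h | exact: hin h | exact: hin h | exact: hout h].
by apply/setP => v; rewrite inE -(closed_connect clU (hconn u0 v)) hu0.
Qed.

Lemma all_relays_signed_cycle (u0 : 'I_n) :
  sconnected pos neg -> (forall v, relay v) -> signed_cycle pos neg.
Proof.
move=> hconn hrel.
have arcE j i : arc j i = (i == out_nbr j) by apply: relay_arcE.
have onto : out_nbr @: setT = setT.
  apply/setP => v; rewrite !inE; have /andP[_ /indeg_gt0P[j hj]] := hrel v.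
  by apply/imsetP; exists j; rewrite ?inE //; apply/eqP; rewrite -arcE.
have inj : injective out_nbr.
  have injT : {in setT &, injective out_nbr} by apply/imset_injP; rewrite onto.
  by move=> x y; apply: injT; rewrite inE.
have reach v : fconnect out_nbr u0 v.
  apply: connect_sub (hconn u0 v) => x y /orP[]; rewrite arcE => /eqP ->.
    exact: fconnect1.
  by rewrite fconnect_sym //; apply: fconnect1.
split; last by move=> j i; apply: relay_no_parallel.
exists (orbit out_nbr u0); split.
- by rewrite size_orbit.
- exact: orbit_uniq.
- by move=> v; rewrite -fconnect_orbit.
- move=> j i; rewrite arcE; congr (_ == _); apply/eqP.
  by apply: (next_cycle (cycle_orbit inj u0)); rewrite -fconnect_orbit.
Qed.

Lemma relay_set_in_arc (U : {set 'I_n}) :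
  sconnected pos neg -> ~ signed_cycle pos neg -> U != set0 ->
  {in U, forall u, relay u} -> exists u j, [/\ u \in U, j \notin U & arc j u].
Proof.
move=> hconn hcyc hU hrel.
case: (boolP [exists u, exists j, [&& u \in U, j \notin U & arc j u]]).
  by case/existsP=> u /existsP[j /and3P[hu hj ha]]; exists u, j.
rewrite negb_exists => /forallP hno; exfalso; apply: hcyc.
have hin u j : u \in U -> arc j u -> j \in U.
  move=> hu ha; move: (hno u); rewrite negb_exists => /forallP /(_ j).
  by rewrite hu ha andbT negbK.
have UT := relays_in_closed_setT hconn hrel hin hU.
have [u0 _] := set0Pn _ hU.
by apply: (all_relays_signed_cycle u0 hconn) => v; apply: hrel; rewrite UT inE.
Qed.

Definition leveled (S : {set 'I_n}) (p : 'I_n -> 'I_n) (l : 'I_n -> nat) :=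
  [/\ forall i, ~~ relay i -> i \in S,
      forall i, i \in S -> relay i -> [/\ arc (p i) i, p i \in S & l (p i) < l i] &
      forall i, i \in S -> l i < #|S|].

Lemma leveled_add S p l u j : leveled S p l -> u \notin S -> j \in S -> arc j u ->
  leveled (u |: S) (fun i => if i == u then j else p i)
                   (fun i => if i == u then #|S| else l i).
Proof.
move=> [hnr hpar hl] hu hj ha; have hju : j != u by apply: contraNneq hu => <-.
split.
- by move=> i /hnr hi; rewrite in_setU1 hi orbT.
- move=> i; rewrite in_setU1; case: eqP => [-> _ _|_ /= hi /(hpar i hi)[hpi hpS hlt]].
    by rewrite (negbTE hju) in_setU1 hj orbT hl.
  have hpu : p i != u by apply/eqP => e; rewrite -e hpS in hu.
  by rewrite (negbTE hpu) in_setU1 hpS orbT.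
- move=> i; rewrite cardsU1 hu add1n in_setU1; case: eqP => [//|_ /= /hl].
  exact: ltnW.
Qed.

Lemma leveled_setT S p l : sconnected pos neg -> ~ signed_cycle pos neg ->
  leveled S p l -> exists p' l', leveled setT p' l'.
Proof.
move=> hconn hcyc hS; have [k hk] : exists k, #|~: S| <= k by exists #|~: S|.
elim: k S p l hk hS => [|k IH] S p l hk hS;
  case: (eqVneq (~: S) set0) => [SC0|hU];
  do ?by rewrite -[S]setCK SC0 setC0 in hS; exists p, l.
  by move: hk; rewrite leqn0 cards_eq0 (negbTE hU).
have [u [j [hu hj ha]]] : exists u j, [/\ u \in ~: S, j \notin ~: S & arc j u].
  apply: relay_set_in_arc => // v; rewrite inE.
  by apply: contraNT; case: hS => hnr _ _ /hnr.
rewrite inE in hu; rewrite inE negbK in hj.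
apply: IH (leveled_add hS hu hj ha).
by rewrite setCU setIC -setDE; move: hk; rewrite (cardsD1 u (~: S)) inE hu.
Qed.

Lemma parent_level_exists : sconnected pos neg -> ~ signed_cycle pos neg ->
  exists (par : 'I_n -> 'I_n) (lvl : 'I_n -> nat),
    [/\ forall i, 0 < indeg i -> arc (par i) i,
        forall i, relay i -> lvl (par i) < lvl i &
        forall i, lvl i < n].
Proof.
move=> hconn hcyc.
have leveled0 : leveled [set i | ~~ relay i] id (fun _ => 0).
  by split=> [i hi|i|i hi]; rewrite ?inE ?hi //; [move/negbTE -> | apply/card_gt0P; exists i].
have [p [l [_ hp hl]]] := leveled_setT hconn hcyc leveled0.
exists (fun i => if relay i then p i else odflt i [pick j | arc j i]), l; split.
- move=> i /indeg_gt0P[j hj]; case: ifP => [hi|_]; first by case: (hp i (in_setT i) hi).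
  by case: pickP => [//|/(_ j)]; rewrite hj.
- by move=> i hi; rewrite hi; case: (hp i (in_setT i) hi).
- by move=> i; have := hl i (in_setT i); rewrite cardsT card_ord.
Qed.

End Relays.

Local Open Scope ring_scope.

Lemma threshold_switch (t m : int) (e b : bool) : 0 <= t < m ->
  (exists2 v, 0 <= v < m & (((t < v) == e) == ~~ b) && (((t < v + 1) == e) == b))
  <-> b = e.
Proof.
case/andP=> t0 tm; split => [[v _]|->]; last first.
  by exists t; rewrite ?t0 ?tm // ltxx ltzD1 lexx; case: e.
by rewrite ltzD1; case: ltgtP => _; case: b; case: e.
Qed.

Lemma indicator_step_sign (w : int) (u b c c' r : bool) : 0 <= w ->
  let F g := if g == u then w else 0 in
  (if b == u then 0 < F (c' && r) - F (c && r) else F (c' && r) - F (c && r) < 0)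
  = (0 < w) && [&& r, c == ~~ b & c' == b].
Proof.
move=> w0 /=.
by case: u b c c' r => -[] [] [] [] //=;
  rewrite ?subrr ?subr0 ?sub0r ?ltxx ?oppr_gt0 ?oppr_lt0 ?andbF ?andbT // ltNge w0.
Qed.

Section Construction.
Variables (n : nat) (pos neg : rel 'I_n) (par : 'I_n -> 'I_n) (lvl : 'I_n -> nat).
Hypothesis par_arc : forall i, (0 < indeg pos neg i)%N -> arcG pos neg (par i) i.
Hypothesis lvl_par : forall i, relay pos neg i -> (lvl (par i) < lvl i)%N.
Hypothesis lvl_lt : forall i, (lvl i < n)%N.

Local Notation arc := (arcG pos neg).
Local Notation outdeg := (outdeg pos neg).
Local Notation indeg := (indeg pos neg).
Local Notation parallel := (parallel pos neg).
Local Notation has_parallel := (has_parallel pos neg).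
Local Notation relay := (relay pos neg).

Definition bnd i : int :=
  if outdeg i == 0%N then (if (0 < indeg i)%N then 1 else 0) else (outdeg i)%:Z.

Definition omega i : int :=
  if indeg i == 0%N then 0 else if has_parallel i then 2 else 1.

(* Non-relays output only 0 or omega j <= threshold j, and omega j = 2 avoids
   the value 1 read through parallel arcs: their outputs are never active. *)
Definition threshold j : int := if relay j then 0 else omega j.

Definition up_from (h : 'I_n -> bool) i := parallel (par i) i || (h (par i) == pos (par i) i).

(* high j: whether the active values of j are those above its threshold.  The
   recursion follows par, which decreases lvl on relays, so fuel n suffices. *)
Fixpoint high_fuel k j : bool :=
  if k is k'.+1 then relay j ==> up_from (high_fuel k') j else true.

Definition high j := high_fuel n j.

Definition up i := up_from high i.

Definition accepts j i (v : int) : bool :=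
  if parallel j i then v == 1 else arc j i ==> ((threshold j < v) == (up i == pos j i)).

Definition gate i (x : {ffun 'I_n -> int}) := [forall j, accepts j i (x j)].

Definition fds (x : {ffun 'I_n -> int}) : {ffun 'I_n -> int} :=
  [ffun i => if gate i x == up i then omega i else 0].

Definition active j (v : int) := ((threshold j < v) == high j) || has_parallel j && (v == 1).

Lemma bnd_ge0 i : 0 <= bnd i.
Proof. by rewrite /bnd; case: ifP => _ //; case: ifP. Qed.

Lemma bnd_outdeg j : (0 < outdeg j)%N -> bnd j = (outdeg j)%:Z.
Proof. by rewrite /bnd lt0n => /negbTE ->. Qed.

Lemma omega_ge0 i : 0 <= omega i.
Proof. by rewrite /omega; case: ifP => _ //; case: ifP. Qed.

Lemma omega_gt0 i : (0 < indeg i)%N -> 0 < omega i.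
Proof. by rewrite /omega lt0n => /negbTE ->; case: ifP. Qed.

Lemma omega0 i : indeg i = 0%N -> omega i = 0.
Proof. by rewrite /omega => ->. Qed.

Lemma omega_le_bnd i : omega i <= bnd i.
Proof.
rewrite /omega; case: (posnP (indeg i)) => [_|hin] /=; first exact: bnd_ge0.
case: (boolP (has_parallel i)) => [/existsP[k /parallel_outdeg ho]|_].
  by rewrite bnd_outdeg ?lez_nat //; apply: leq_trans ho.
rewrite /bnd; case: ifP => [_|/negbT]; first by rewrite hin.
by rewrite -lt0n lez_nat.
Qed.

Lemma parallel_bnd j i : parallel j i -> 2 <= bnd j.
Proof.
move/parallel_outdeg => ho; rewrite bnd_outdeg ?lez_nat //; exact: leq_trans ho.
Qed.

Lemma threshold_lt_bnd j i : arc j i -> ~~ parallel j i -> 0 <= threshold j < bnd j.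
Proof.
move=> ha hnp; have ho : (0 < outdeg j)%N by apply/outdeg_gt0P; exists i.
rewrite bnd_outdeg // /threshold; case: ifP => [_|hnr]; first by rewrite ltz_nat.
rewrite /omega; case: ifP => [_|/negbT hin]; first by rewrite ltz_nat.
case: ifP => [hpar|_]; first by have := has_parallel_outdeg hpar ha hnp; rewrite /= ltz_nat.
rewrite /= ltz_nat ltn_neqAle eq_sym ho andbT.
by move: hnr; rewrite /relay lt0n hin andbT => /negbT.
Qed.

Lemma high_fuel_stable k k' j :
  (lvl j < k)%N -> (lvl j < k')%N -> high_fuel k j = high_fuel k' j.
Proof.
elim: k k' j => [|k IH] [|k'] j //= hk hk'; case hr: (relay j) => //=.
have hp := lvl_par hr; rewrite /up_from (IH k') //; lia.
Qed.

Lemma high_relay j : relay j -> high j = up j.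
Proof.
move=> hr; have := lvl_par hr; have := lvl_lt (par j) => hpn hpj.
rewrite /high (@high_fuel_stable _ (lvl j).+1) //= hr /up_from.
by rewrite (@high_fuel_stable (lvl j) n).
Qed.

Lemma high_nonrelay j : ~~ relay j -> high j.
Proof.
by move=> hnr; rewrite /high (@high_fuel_stable _ (lvl j).+1) //= (negbTE hnr).
Qed.

Definition switches j i (b : bool) :=
  exists2 v, 0 <= v < bnd j & (accepts j i v == ~~ b) && (accepts j i (v + 1) == b).

Lemma switchesE j i b : switches j i b <-> if b == up i then pos j i else neg j i.
Proof.
rewrite /switches /accepts; case: (boolP (parallel j i)) => [hp|hnp].
  have b2 := parallel_bnd hp; case/andP: hp => -> ->; rewrite if_same; split => // _.
  by case: b; [exists 0 | exists 1]; rewrite // (lt_le_trans _ b2).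
case: (boolP (arc j i)) => /= ha; last first.
  move: ha; rewrite /arcG negb_or => /andP[/negbTE -> /negbTE ->].
  by rewrite if_same; split => [[v _]|]; case: b.
have hneg : neg j i = ~~ pos j i.
  by move: ha hnp; rewrite /arcG /parallel; case: (pos j i); case: (neg j i).
apply: iff_trans (threshold_switch _ _ (threshold_lt_bnd ha hnp)) _.
by rewrite hneg; case: b; case: (up i); case: (pos j i).
Qed.

Lemma switches_arc j i b : switches j i b -> arc j i.
Proof. by move/switchesE; rewrite /arcG; case: ifP => _ ->; rewrite ?orbT. Qed.

Lemma gate_except i j x :
  gate i x = accepts j i (x j) && [forall k, (k != j) ==> accepts k i (x k)].
Proof.
apply/forallP/andP => [h|[hj /forallP hk] k].
  by split=> //; apply/forallP => k; apply/implyP.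
by case: (eqVneq k j) => [->//|]; apply/implyP.
Qed.

Lemma gate_unit_add i j x :
  gate i (unit_add x j) = accepts j i (x j + 1) && [forall k, (k != j) ==> accepts k i (x k)].
Proof.
rewrite (gate_except i j) ffunE eqxx; congr andb; apply: eq_forallb => k.
by case: (eqVneq k j) => //= hk; rewrite ffunE (negbTE hk) addr0.
Qed.

Lemma fds_step_sign j i x b :
  (if b == up i then 0 < fds (unit_add x j) i - fds x i
   else fds (unit_add x j) i - fds x i < 0)
  = (0 < omega i) && [&& [forall k, (k != j) ==> accepts k i (x k)],
                         accepts j i (x j) == ~~ b & accepts j i (x j + 1) == b].
Proof. by rewrite !ffunE gate_unit_add (gate_except i j) indicator_step_sign ?omega_ge0. Qed.

Lemma accepts_sat k i : exists w, (0 <= w <= bnd k) && accepts k i w.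
Proof.
rewrite /accepts; case: (boolP (parallel k i)) => [hp|hnp].
  by exists 1; rewrite eqxx andbT (le_trans _ (parallel_bnd hp)).
case: (boolP (arc k i)) => ha; last by exists 0; rewrite lexx bnd_ge0.
have /andP[t0 tb] := threshold_lt_bnd ha hnp.
case: (up i == pos k i); first by exists (bnd k); rewrite tb bnd_ge0 lexx.
by exists 0; rewrite lexx bnd_ge0 /= ltNge t0.
Qed.

Lemma fds_switches j i b : switches j i b <->
  exists x, [/\ inX (fun _ => 0) bnd x, x j < bnd j &
    if b == up i then 0 < fds (unit_add x j) i - fds x i
    else fds (unit_add x j) i - fds x i < 0].
Proof.
split=> [hs|[x [hx hxj]]]; last first.
  rewrite fds_step_sign => /andP[_ /and3P[_ c c']].
  by exists (x j); rewrite ?c ?c' // hxj andbT; case/andP: (hx j).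
have w_gt0 : 0 < omega i by apply/omega_gt0/indeg_gt0P; exists j; apply: switches_arc hs.
case: hs => v /andP[v0 vb] hv.
pose w k := xchoose (accepts_sat k i).
have hw k : (0 <= w k <= bnd k) && accepts k i (w k) := xchooseP (accepts_sat k i).
exists [ffun k => if k == j then v else w k]; split.
- move=> k; rewrite ffunE; case: eqP => [->|_]; first by rewrite v0 ltW.
  by case/andP: (hw k).
- by rewrite ffunE eqxx.
rewrite fds_step_sign w_gt0 ffunE eqxx hv andbT; apply/forallP => k; apply/implyP => hk.
by rewrite ffunE (negbTE hk); case/andP: (hw k).
Qed.

Lemma fds_FDS_on : FDS_on (fun _ => 0) bnd fds pos neg.
Proof.
split; first exact: bnd_ge0.
split.
  move=> x _ i; rewrite ffunE; case: ifP => _; last by rewrite lexx bnd_ge0.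
  by rewrite omega_ge0 omega_le_bnd.
split=> j i.
- have := switchesE j i (up i); have := fds_switches j i (up i); rewrite eqxx.
  by move=> h1 h2; apply: iff_trans (iff_sym h2) h1.
- have := switchesE j i (~~ up i); have := fds_switches j i (~~ up i).
  by case: (up i) => /= h1 h2; apply: iff_trans (iff_sym h2) h1.
Qed.

Lemma bnd_degree_bounded : degree_bounded (fun _ => 0) bnd pos neg.
Proof.
move=> i; rewrite subr0 /bnd; case: eqP => [->|_] /=; last by rewrite lexx.
by case: (0 < indeg i)%N.
Qed.

Lemma accepts_par_active i v :
  (0 < indeg i)%N -> accepts (par i) i v -> active (par i) v.
Proof.
move=> hi; rewrite /accepts /active (par_arc hi) /=; case: ifP => [hp /eqP ->|hnp].
  by rewrite eqxx andbT orbC; apply/orP; left; apply/existsP; exists i.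
rewrite /up /up_from hnp /= => hv; apply/orP; left; move: hv.
by case: (high (par i)); case: (pos (par i) i).
Qed.

Lemma relay_active j v : relay j -> active j v = ((0 < v) == up j).
Proof.
move=> hr; rewrite /active /threshold hr high_relay //.
by rewrite (negbTE (relay_no_has_parallel hr)) orbF.
Qed.

Lemma nonrelay_inactive j v : ~~ relay j -> (v == 0) || (v == omega j) -> ~~ active j v.
Proof.
move=> hnr hv; rewrite /active /threshold (negbTE hnr) high_nonrelay // eqb_id negb_or.
rewrite -leNgt negb_and; case/orP: hv => /eqP ->; first by rewrite omega_ge0 orbT.
by rewrite lexx /omega; case: ifP => _ //; case: (has_parallel j).
Qed.

Lemma fds_active x j : active j (fds x j) -> relay j && active (par j) (x (par j)).
Proof.
case: (boolP (relay j)) => [hr|hnr]; last first.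
  apply/contraTT => _; apply: nonrelay_inactive; rewrite // ffunE.
  by case: ifP; rewrite eqxx ?orbT.
have hin : (0 < indeg j)%N by case/andP: hr.
rewrite relay_active // ffunE; case hg: (gate j x) => /=.
  by move: hg; rewrite (gate_except j (par j)) => /andP[/(accepts_par_active hin) ->].
have -> : omega j = 1.
  by move: hin; rewrite /omega lt0n => /negbTE ->; rewrite (negbTE (relay_no_has_parallel hr)).
by case: (up j).
Qed.

Lemma active_iter t x j : active j (iter t.+1 fds x j) -> (t < lvl j)%N.
Proof.
elim: t j => [|t IH] j /fds_active /andP[hr ha]; have := lvl_par hr; first by lia.
by have := IH _ ha; lia.
Qed.

Lemma iter_fds_const x : iter n.+1 fds x = [ffun i => if up i then 0 else omega i].
Proof.
apply/ffunP => i; rewrite !ffunE.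
case: (posnP (indeg i)) => [hi|hi]; first by rewrite omega0 //; case: ifP; case: (up i).
suff -> : gate i (iter n fds x) = false by case: (up i).
apply/negP; rewrite (gate_except i (par i)) => /andP[/(accepts_par_active hi) ha _].
have n_gt0 : (0 < n)%N := leq_ltn_trans (leq0n _) (ltn_ord i).
have := @active_iter n.-1 x (par i); rewrite prednK // => /(_ ha).
by have := lvl_lt (par i); lia.
Qed.

End Construction.

Theorem theorem3 (n : nat) (pos neg : rel 'I_n) :
  sconnected pos neg -> ~ signed_cycle pos neg ->
  exists (a b : 'I_n -> int) (f : {ffun 'I_n -> int} -> {ffun 'I_n -> int}),
    [/\ FDS_on a b f pos neg, degree_bounded a b pos neg &
        constant_on a b (iter n.+1 f)].
Proof.
move=> hconn hcyc.
have [par [lvl [par_arc lvl_par lvl_lt]]] := parent_level_exists hconn hcyc.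
exists (fun _ => 0), (bnd pos neg), (fds pos neg par); split.
- exact: fds_FDS_on.
- exact: bnd_degree_bounded.
- by move=> x y _ _; rewrite !(iter_fds_const par_arc lvl_par lvl_lt).
Qed.
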